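(* Let $A\in\mathbb R^{(m-1)\times n}$, $b\in\mathbb R^{m-1}$, $c\in\mathbb R^n$, $d\in\mathbb R$, and let $\mathcal S=\{x\in\mathbb R^n:\|Ax-b\|_2\le c^Tx-d\}$. Assume $\mathcal S\neq\emptyset$, $A^TA-cc^T$ is positive semidefinite, and $\begin{bmatrix}b\\ d\end{bmatrix}$ is not in the image (column space) of $\begin{bmatrix}A\\ c^T\end{bmatrix}$. Then $$\mathcal S=\{x\in\mathbb R^n: x^T(A^TA-cc^T)x-2(A^Tb-cd)^Tx+b^Tb-d^2\le0\}.$$ *)

(* matrices over an arbitrary real closed field R (covers the reals). *)
From mathcomp Require Import all_boot all_order all_algebra.
Set Implicit Arguments. Unset Strict Implicit. Unset Printing Implicit Defensive.
Import Order.TTheory GRing.Theory Num.Theory.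
Local Open Scope ring_scope.

Definition norm2 (R : rcfType) (k : nat) (v : 'cV[R]_k) : R :=
  Num.sqrt (\sum_(i < k) v i 0 ^+ 2).

Definition psd (R : rcfType) (n : nat) (M : 'M[R]_n) : Prop :=
  forall v : 'cV[R]_n, 0 <= (v^T *m M *m v) 0 0.

Definition soc_set (R : rcfType) (p n : nat) (A : 'M[R]_(p, n)) (b : 'cV[R]_p)
  (c : 'cV[R]_n) (d : R) (x : 'cV[R]_n) : Prop :=
  norm2 (A *m x - b) <= (c^T *m x) 0 0 - d.

Definition quad_set (R : rcfType) (p n : nat) (A : 'M[R]_(p, n)) (b : 'cV[R]_p)
  (c : 'cV[R]_n) (d : R) (x : 'cV[R]_n) : Prop :=
  (x^T *m (A^T *m A - c *m c^T) *m x) 0 0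
  - 2 * ((A^T *m b - d *: c)^T *m x) 0 0
  + (b^T *m b) 0 0 - d ^+ 2 <= 0.

(* With r = A x - b and s = c^T x - d, the quadratic inequality says exactly
   |r|^2 - s^2 <= 0, so it only loses the sign condition s >= 0.  Since
   A^T A - c c^T is the quadratic part of x |-> |r|^2 - s^2, this function is
   convex.
   If some x had s < 0, then on the segment from a point of S to x the affine
   s vanishes somewhere, while |r|^2 - s^2 stays <= 0 by convexity; there r = 0
   and s = 0, i.e. [b; d] lies in the image of [A; c^T]. *)

From mathcomp Require Import all_boot all_order all_algebra.
From mathcomp Require Import ring lra.
Import Order.TTheory GRing.Theory Num.Theory.
Local Open Scope ring_scope.
Set Implicit Arguments. Unset Strict Implicit.

Section DotProduct.
Variables (R : realDomainType) (k : nat).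
Implicit Types (u v w : 'cV[R]_k).

Definition dot u w : R := (u^T *m w) 0 0.

Lemma dotE u w : dot u w = \sum_i u i 0 * w i 0.
Proof. by rewrite /dot mxE; apply: eq_bigr => i _; rewrite mxE. Qed.

Lemma dotC u w : dot u w = dot w u.
Proof. by rewrite !dotE; apply: eq_bigr => i _; rewrite mulrC. Qed.

Lemma dotDl u v w : dot (u + v) w = dot u w + dot v w.
Proof. by rewrite !dotE -big_split; apply: eq_bigr => i _; rewrite mxE mulrDl. Qed.

Lemma dotZl a u w : dot (a *: u) w = a * dot u w.
Proof. by rewrite !dotE mulr_sumr; apply: eq_bigr => i _; rewrite mxE mulrA. Qed.

Lemma dotBl u v w : dot (u - v) w = dot u w - dot v w.
Proof. by rewrite dotDl -scaleN1r dotZl mulN1r. Qed.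

Lemma dotDr u v w : dot w (u + v) = dot w u + dot w v.
Proof. by rewrite dotC dotDl !(dotC w). Qed.

Lemma dotBr u v w : dot w (u - v) = dot w u - dot w v.
Proof. by rewrite dotC dotBl !(dotC w). Qed.

Lemma dotZr a u w : dot w (a *: u) = a * dot w u.
Proof. by rewrite dotC dotZl dotC. Qed.

Lemma dot_ge0 u : 0 <= dot u u.
Proof. by rewrite dotE; apply: sumr_ge0 => i _; rewrite -expr2 sqr_ge0. Qed.

Lemma dot_eq0 u : (dot u u == 0) = (u == 0).
Proof.
apply/idP/eqP => [|->]; last by rewrite dotE big1 // => i _; rewrite mxE mul0r.
rewrite dotE psumr_eq0 => [/allP u0|i _]; last by rewrite -expr2 sqr_ge0.
apply/matrixP => i j; rewrite ord1 mxE.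
by apply/eqP; rewrite -sqrf_eq0 expr2; apply: u0; rewrite mem_index_enum.
Qed.

Lemma dot_shift u w l :
  dot (u + l *: w) (u + l *: w) = dot u u + 2 * dot u w * l + dot w w * l ^+ 2.
Proof. by rewrite !dotDl !dotDr !dotZl !dotZr (dotC w u); ring. Qed.

End DotProduct.

Lemma norm2_le (R : rcfType) k (u : 'cV[R]_k) s :
  norm2 u <= s <-> 0 <= s /\ dot u u <= s ^+ 2.
Proof.
have norm2_le_sqr : 0 <= s -> (norm2 u <= s) = (dot u u <= s ^+ 2).
  move=> s_ge0; rewrite /norm2 -{1}(ger0_norm s_ge0) -sqrtr_sqr ler_sqrt ?sqr_ge0 //.
  by rewrite dotE; under eq_bigr do rewrite expr2.
split=> [le_us | [s_ge0]]; last by rewrite norm2_le_sqr.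
have s_ge0 : 0 <= s by apply: le_trans le_us; rewrite sqrtr_ge0.
by rewrite -norm2_le_sqr.
Qed.

Lemma convex_quadratic_le0 (R : realDomainType) (a0 a1 a2 l : R) :
  0 <= a2 -> a0 <= 0 -> a0 + a1 + a2 <= 0 -> 0 <= l <= 1 ->
  a0 + a1 * l + a2 * l ^+ 2 <= 0.
Proof.
move=> a2_ge0 a0_le0 a1_le0 /andP[l_ge0 l_le1].
have -> : a0 + a1 * l + a2 * l ^+ 2
    = (1 - l) * a0 + l * (a0 + a1 + a2) - l * (1 - l) * a2 by ring.
have : 0 <= l * (1 - l) * a2 by rewrite !mulr_ge0 // subr_ge0.
have : (1 - l) * a0 <= 0 by rewrite mulr_ge0_le0 // subr_ge0.
have : l * (a0 + a1 + a2) <= 0 by rewrite mulr_ge0_le0.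
lra.
Qed.

Lemma affine_root (R : realFieldType) (s r : R) :
  0 <= s -> s + r < 0 -> exists2 l, 0 <= l <= 1 & s + l * r = 0.
Proof.
move=> s_ge0 sr_lt0; have r_lt0 : r < 0 by lra.
exists (s / - r); last by field; rewrite ltr0_neq0.
rewrite divr_ge0 ?ler_pdivrMr ?oppr_gt0 ?oppr_ge0 //= ?mul1r; lra.
Qed.

Section SecondOrderCone.
Variables (R : rcfType) (p n : nat).
Variables (A : 'M[R]_(p, n)) (b : 'cV[R]_p) (c : 'cV[R]_n) (d : R).
Implicit Types (x v : 'cV[R]_n).

Let M := A^T *m A - c *m c^T.

Definition residual x := A *m x - b.
Definition slack x := (c^T *m x) 0 0 - d.
Definition gap x := dot (residual x) (residual x) - slack x ^+ 2.

Lemma residual_shift x v l : residual (x + l *: v) = residual x + l *: (A *m v).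
Proof. by rewrite /residual mulmxDr -scalemxAr addrAC. Qed.

Lemma slack_shift x v l : slack (x + l *: v) = slack x + l * (c^T *m v) 0 0.
Proof. by rewrite /slack mulmxDr -scalemxAr !mxE addrAC. Qed.

Lemma quad_form_gram v : (v^T *m M *m v) 0 0 = dot (A *m v) (A *m v) - (c^T *m v) 0 0 ^+ 2.
Proof.
have -> : v^T *m M *m v = (A *m v)^T *m (A *m v) - (c^T *m v)^T *m (c^T *m v).
  by rewrite mulmxBr mulmxBl !trmx_mul trmxK !mulmxA.
by rewrite [LHS]mxE [X in _ + X]mxE [X in _ - X]mxE big_ord1 [(c^T *m v)^T _ _]mxE -expr2.
Qed.

Lemma gap_shift x v l :
  gap (x + l *: v) =
  gap x + 2 * (dot (residual x) (A *m v) - slack x * (c^T *m v) 0 0) * l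
        + (v^T *m M *m v) 0 0 * l ^+ 2.
Proof. by rewrite /gap residual_shift slack_shift dot_shift quad_form_gram; ring. Qed.

Lemma quad_set_gap x : quad_set A b c d x <-> gap x <= 0.
Proof.
rewrite /quad_set -/M quad_form_gram.
have -> : ((A^T *m b - d *: c)^T *m x) 0 0 = dot (A *m x) b - d * (c^T *m x) 0 0.
  rewrite linearB /= linearZ /= mulmxBl -scalemxAl trmx_mul trmxK -mulmxA.
  by rewrite [LHS]mxE [X in _ + X]mxE [X in _ - X]mxE dotC.
suff -> : gap x = dot (A *m x) (A *m x) - (c^T *m x) 0 0 ^+ 2
    - 2 * (dot (A *m x) b - d * (c^T *m x) 0 0) + dot b b - d ^+ 2 by [].
by rewrite /gap /residual /slack !dotBl !dotBr (dotC b); ring.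
Qed.

Lemma soc_set_gap x : soc_set A b c d x <-> 0 <= slack x /\ gap x <= 0.
Proof. by rewrite /soc_set norm2_le /gap subr_le0. Qed.

Lemma gap_le0_segment x0 x l : psd M ->
  gap x0 <= 0 -> gap x <= 0 -> 0 <= l <= 1 -> gap (x0 + l *: (x - x0)) <= 0.
Proof.
move=> psdM gap0 gapx l01; rewrite gap_shift.
apply: convex_quadratic_le0 => //.
by have := gap_shift x0 (x - x0) 1; rewrite expr1n !mulr1 scale1r subrKC => <-.
Qed.

Lemma gap_slack0_solution y : gap y <= 0 -> slack y = 0 ->
  col_mx A c^T *m y = col_mx b (d%:M : 'cV[R]_1).
Proof.
move=> gapy sy0; rewrite mul_col_mx; congr col_mx.
  move: gapy; rewrite /gap sy0 expr0n subr0 => res_le0.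
  have : dot (residual y) (residual y) == 0 by rewrite eq_le res_le0 dot_ge0.
  by rewrite dot_eq0 subr_eq0 => /eqP.
apply/matrixP => i j; rewrite !ord1 [RHS]mxE mulr1n.
by apply/eqP; rewrite -subr_eq0; apply/eqP.
Qed.

End SecondOrderCone.

Theorem lemma5p2 (R : rcfType) (p n : nat) (A : 'M[R]_(p, n)) (b : 'cV[R]_p)
    (c : 'cV[R]_n) (d : R) :
  (exists x : 'cV[R]_n, soc_set A b c d x) ->
  psd (A^T *m A - c *m c^T) ->
  ~ (exists y : 'cV[R]_n, col_mx A c^T *m y = col_mx b (d%:M : 'cV[R]_1)) ->
  forall x : 'cV[R]_n, soc_set A b c d x <-> quad_set A b c d x.
Proof.
move=> [x0 /soc_set_gap[slack0 gap0]] psdM no_solution x.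
rewrite soc_set_gap quad_set_gap; split=> [[] // | gapx]; split=> //.
rewrite leNgt; apply/negP => slackx_lt0; apply: no_solution.
have := slack_shift c d x0 (x - x0) 1; rewrite scale1r subrKC mul1r => slack_x.
rewrite slack_x in slackx_lt0.
have [l l01 slack_l] := affine_root slack0 slackx_lt0.
exists (x0 + l *: (x - x0)); apply: gap_slack0_solution.
  exact: gap_le0_segment.
by rewrite slack_shift.
Qed.
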